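(* Let $A$ be a circular $m\times n$ matrix and $\alpha$ a positive integer. Let $\Gamma$ be a circuit in $F(A)$ with $s$ row arcs and winding number $p$, such that $p$ does not divide $t(\Gamma,\alpha\mathbf{1})$ and $2\le p\le t(\Gamma,\alpha\mathbf{1})-1$. Let $r:=\alpha s-p\lfloor \alpha s/p\rfloor$. Then the $\Gamma$-inequality for $Q^*(A,\alpha\mathbf{1})$ (i.e. with $b=\alpha\mathbf{1}$) has the form $$r\sum_{j\notin\otimes(\Gamma)}x_j+(r+1)\sum_{j\in\otimes(\Gamma)}x_j\ge r\left\lceil\frac{\alpha s}{p}\right\rceil.$$ Moreover, if $\alpha=1$ and $\otimes(\Gamma)\neq\emptyset$, this inequality is the row family inequality induced by $F:=\{i\in[m]: a_i \text{ is a row arc of }\Gamma\}$.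
   Context: Notation: $[n]=\{1,\dots,n\}$ with addition mod $n$ (index $0$ identified with $n$); for $a,c\in[n]$ with $t\ge0$ minimal such that $a+t\equiv c\pmod n$, $[a,c)_n=\{a,\dots,a+t-1\}$ (mod $n$). An $m\times n$ $\{0,1\}$-matrix $A=(a_{ij})$ is circular if for each row $i$ there are $\ell_i\in[n]$ and an integer $2\le k_i\le n-1$ with row $i$ the incidence vector of $[\ell_i,\ell_i+k_i)_n$. $Q(A,b)=\{x\ge0:Ax\ge b\}$, $Q^*(A,b)=\operatorname{conv}(Q(A,b)\cap\mathbb{Z}^n)$. $D(A)$: node set $[n]$; forward row arcs $a_i=(\ell_i-1,\ell_i+k_i-1)$, forward short arcs $(j-1,j)$, reverse row arcs $\bar a_i=(\ell_i+k_i-1,\ell_i-1)$, reverse short arcs $(j,j-1)$, with lengths $k_i,1,-k_i,-1$. $F(A)$ is $D(A)$ with all reverse row arcs removed. A circuit is a simple directed circuit; winding number $p(\Gamma)$: $p(\Gamma)n=$ sum of arc lengths. A forward row arc $a_i$ jumps over $j$ iff $j\in[\ell_i,\ell_i+k_i)_n$; $(j-1,j)$ jumps over $j$ only; a reverse arc jumps over $j$ iff its antiparallel forward arc does; $p^-(\Gamma,j)$ = number of reverse arcs of $\Gamma$ jumping over $j$. $\otimes(\Gamma)=\{j\in[n]:(j,j-1)\in E(\Gamma)\}$. For a circuit $\Gamma$ and $b\in\mathbb{Z}_+^m$: $t(\Gamma,b)=\sum_{i:a_i\in E(\Gamma)}b_i-\sum_{i:\bar a_i\in E(\Gamma)}b_i$;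 for $p(\Gamma)\ne0$, $\beta=\lfloor t(\Gamma,b)/p(\Gamma)\rfloor$, $\rho=t(\Gamma,b)-\beta p(\Gamma)$, and the $\Gamma$-inequality is $\sum_{j}[p^-(\Gamma,j)+\rho]x_j\ge\rho(\beta+1)+\sum_{i:\bar a_i\in E(\Gamma)}b_i$. Row family inequalities: for $F\subseteq[m]$ with $s=|F|\ge2$ and integer $1\le p\le s-1$ not dividing $s$, let $r=s-p\lfloor s/p\rfloor$, $I(F,p)=\{j:\sum_{i\in F}a_{ij}\le p\}$, $O(F,p)=\{j:\sum_{i\in F}a_{ij}=p+1\}$; the rfi induced by $(F,p)$ is $(r+1)\sum_{j\in O(F,p)}x_j+r\sum_{j\in I(F,p)}x_j\ge r\lceil s/p\rceil$. The rfi induced by $F$ is the one induced by $(F,p^* )$ with $p^*=\max_j\sum_{i\in F}a_{ij}-1$. *)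

From mathcomp Require Import all_boot all_order all_algebra.
Set Implicit Arguments. Unset Strict Implicit. Unset Printing Implicit Defensive.
Import Order.TTheory GRing.Theory Num.Theory.

(* Convention: [n] = {1,..,n} with n identified with 0, so a node / column
   j in [n] is represented by its residue mod n, i.e. by an element of 'I_n
   (column n <-> 0). *)

Section Circ.
Variables (m n : nat).

Definition floorq (a b : int) : int := Num.floor ((a%:~R / b%:~R)%R : rat).
Definition ceilq (a b : int) : int := Num.ceil ((a%:~R / b%:~R)%R : rat).

(* j \in [l, l+k)_n *)
Definition in_cint (l : 'I_n) (k : nat) (j : 'I_n) : bool :=
  (j + n - l) %% n < k.

Definition circular_with (A : 'M[nat]_(m, n)) (l : 'I_m -> 'I_n)
    (k : 'I_m -> nat) : Prop :=
  forall i : 'I_m, (2 <= k i <= n.-1)%N /\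
    forall j : 'I_n, A i j = nat_of_bool (in_cint (l i) (k i) j).

(* Arcs of D(A):  (inl i, false) = forward row arc a_i,
                  (inl i, true)  = reverse row arc \bar a_i,
                  (inr j, false) = forward short arc (j-1, j),
                  (inr j, true)  = reverse short arc (j, j-1). *)
Definition darc := (('I_m + 'I_n) * bool)%type.

Definition is_rev (e : darc) : bool := e.2.
Definition is_row (e : darc) : bool := if e.1 is inl _ then true else false.

Variables (l : 'I_m -> 'I_n) (k : 'I_m -> nat).

Definition ftl (e : darc) : nat :=
  match e.1 with inl i => (l i + n - 1) %% n | inr j => (j + n - 1) %% n end.
Definition fhd (e : darc) : nat :=
  match e.1 with inl i => (l i + k i + n - 1) %% n | inr j => j %% n end.
Definition tl (e : darc) : nat := if is_rev e then fhd e else ftl e.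
Definition hd (e : darc) : nat := if is_rev e then ftl e else fhd e.

Definition arc_len (e : darc) : int :=
  let L : int := match e.1 with inl i => Posz (k i) | inr _ => 1%R end in
  if is_rev e then (- L)%R else L.

(* simple directed circuit of D(A), given as the cyclic sequence of its arcs *)
Definition D_circuit (c : seq darc) : bool :=
  [&& c != [::], cycle (fun e f => hd e == tl f) c & uniq (map tl c)].

(* circuit of F(A) = D(A) without reverse row arcs *)
Definition F_circuit (c : seq darc) : bool :=
  D_circuit c && all (fun e => ~~ (is_row e && is_rev e)) c.

(* winding number: p(Gamma) * n = sum of darc lengths *)
Definition winding (c : seq darc) : int := ((\sum_(e <- c) arc_len e)%R %/ Posz n)%Z.

Definition jumps (e : darc) (j : 'I_n) : bool :=
  match e.1 with inl i => in_cint (l i) (k i) j | inr j' => j' == j end.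

Definition p_minus (c : seq darc) (j : 'I_n) : nat :=
  count (fun e => is_rev e && jumps e j) c.

Definition otimes (c : seq darc) : {set 'I_n} :=
  [set j : 'I_n | (inr j, true) \in c].

Definition tGb (c : seq darc) (b : 'I_m -> nat) : int :=
  (\sum_(e <- c) match e.1 with
                | inl i => if is_rev e then - Posz (b i) else Posz (b i)
                | inr _ => 0 end)%R.

Definition rev_row_b (c : seq darc) (b : 'I_m -> nat) : int :=
  (\sum_(e <- c) match e.1 with
                | inl i => if is_rev e then Posz (b i) else 0
                | inr _ => 0 end)%R.

Definition gbeta (c : seq darc) (b : 'I_m -> nat) : int :=
  floorq (tGb c b) (winding c).
Definition grho (c : seq darc) (b : 'I_m -> nat) : int :=
  (tGb c b - gbeta c b * winding c)%R.

(* Gamma-inequality:  sum_j gamma_coef j * x_j >= gamma_rhs *)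
Definition gamma_coef (c : seq darc) (b : 'I_m -> nat) (j : 'I_n) : int :=
  (Posz (p_minus c j) + grho c b)%R.
Definition gamma_rhs (c : seq darc) (b : 'I_m -> nat) : int :=
  (grho c b * (gbeta c b + 1) + rev_row_b c b)%R.

Definition row_arcs (c : seq darc) : {set 'I_m} :=
  [set i : 'I_m | (inl i, false) \in c].

End Circ.

Definition const_b (m : nat) (alpha : nat) : 'I_m -> nat := fun _ => alpha.

Section RFI.
Variables (m n : nat) (A : 'M[nat]_(m, n)).

Definition colsum (F : {set 'I_m}) (j : 'I_n) : nat := \sum_(i in F) A i j.

Definition rfi_r (F : {set 'I_m}) (p : nat) : nat :=
  #|F| - p * (#|F| %/ p).

(* rfi induced by (F,p): sum_j rfi_coef j * x_j >= rfi_rhs *)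
Definition rfi_coef (F : {set 'I_m}) (p : nat) (j : 'I_n) : int :=
  if colsum F j <= p then Posz (rfi_r F p)
  else if colsum F j == p.+1 then (Posz (rfi_r F p) + 1)%R else 0%R.
Definition rfi_rhs (F : {set 'I_m}) (p : nat) : int :=
  (Posz (rfi_r F p) * ceilq (Posz #|F|) (Posz p))%R.

Definition rfi_ok (F : {set 'I_m}) (p : nat) : bool :=
  [&& 2 <= #|F|, 1 <= p, p <= #|F| - 1 & ~~ (p %| #|F|)].

Definition pstar (F : {set 'I_m}) : nat := (\max_(j : 'I_n) colsum F j) - 1.
End RFI.

From mathcomp Require Import all_boot all_order all_algebra.
From mathcomp Require Import zify ring.
Import Order.TTheory GRing.Theory Num.Theory.
Local Open Scope ring_scope.
Set Implicit Arguments. Unset Strict Implicit. Unset Printing Implicit Defensive.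

(* Lift a circuit of F(A) to the integers: for every column j, the number of
   its arcs jumping over j, reverse short arcs counted negatively, equals the
   winding number p.  As F(A) has no reverse row arcs, p^-(Gamma, j) is the
   indicator of j in otimes(Gamma) and t(Gamma, alpha 1) = alpha s, which gives
   the coefficients rho and rho + 1 of the Gamma-inequality, with rho = r.
   For alpha = 1 the same count says that the column sums of the row family of
   Gamma are p + 1 on otimes(Gamma) and at most p elsewhere (a forward and a
   reverse short arc over the same column would form the whole circuit, of
   winding number 0), so p* = p and the row family inequality coincides with
   the Gamma-inequality. *)

Lemma modn_lt_double (n x : nat) :
  (x < n + n)%N -> (x %% n = if x < n then x else x - n)%N.
Proof.
move=> lt_x_2n; case: ltnP => [/modn_small //|le_n_x].
rewrite -{1}(subnK le_n_x) modnDr modn_small //; lia.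
Qed.

Lemma divz_lt_double (n : nat) (x : int) :
  (0 < n)%N -> - (n : int) <= x -> x < (n : int) + (n : int) ->
  (x %/ n)%Z = (if x < 0 then -1 else if x < (n : int) then 0 else 1).
Proof.
move=> n_gt0 lb ub; have n_neq0 : (n : int) != 0 by lia.
case: ltP => x_neg.
  have -> : x = -1 * (n : int) + (x + n) by ring.
  rewrite divzMDl //.
  by rewrite divz_small; [lia | apply/andP; split; lia].
case: ltP => x_small; first by rewrite divz_small //; apply/andP; split; lia.
have -> : x = 1 * (n : int) + (x - (n : int)) by ring.
rewrite divzMDl //.
by rewrite divz_small; [lia | apply/andP; split; lia].
Qed.

Lemma floorq_divz (a : int) (b : nat) : (0 < b)%N -> floorq a (Posz b) = (a %/ Posz b)%Z.
Proof.
move=> b_gt0; apply: floor_def.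
have b_pos : (0 : rat) < (b : int)%:~R by rewrite ltr0z; lia.
rewrite ler_pdivlMr // ltr_pdivrMr // -!intrM ler_int ltr_int.
by rewrite lez_floor ?ltz_ceil //; lia.
Qed.

Lemma ceilq_floorq (a b : int) :
  b != 0 -> ~~ (b %| a)%Z -> ceilq a b = floorq a b + 1.
Proof.
move=> b_neq0 b_ndvd; rewrite /ceilq /floorq ceil_floor.
case: (boolP (_ \is a Num.int)) => //= /floorK a_div_b.
case/negP: b_ndvd; apply/dvdzP.
exists (Num.floor (a%:~R / b%:~R : rat)); apply: (@intr_inj rat).
by rewrite intrM a_div_b mulfVK // intr_eq0.
Qed.

Lemma uniq_map_inj (T U : eqType) (f : T -> U) (s : seq T) :
  uniq (map f s) -> {in s &, injective f}.
Proof.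
elim: s => [|z s IHs] //= /andP[fz_notin uniq_fs] x y.
rewrite !in_cons => /orP[/eqP->|xs] /orP[/eqP->|ys] // fxy.
- by move: fz_notin; rewrite fxy map_f.
- by move: fz_notin; rewrite -fxy map_f.
- exact: IHs.
Qed.

Section CycleOfArcs.
Variables (T : eqType) (hd tl : T -> nat) (c : seq T).
Hypothesis c_cycle : cycle (fun e f => hd e == tl f) c.

Lemma map_hd_cycle : map hd c = map tl (rot 1 c).
Proof.
case: c c_cycle => [|x s] //=; rewrite rot1_cons.
elim: s {1 3}x => [|y s IHs] x0 /=; first by rewrite andbT => /eqP->.
by case/andP=> /eqP-> /IHs->.
Qed.

Lemma big_hd_cycle (R : nmodType) (G : nat -> R) :
  \sum_(e <- c) G (hd e) = \sum_(e <- c) G (tl e).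
Proof.
rewrite -(big_map hd xpredT) map_hd_cycle big_map.
by apply: perm_big; rewrite perm_rot.
Qed.

Lemma cycle_antiparallel_pair e f :
  uniq (map tl c) -> e \in c -> f \in c -> e != f ->
  hd e = tl f -> hd f = tl e -> perm_eq c [:: e; f].
Proof.
move=> uniq_tl ec fc e_neq_f hd_e hd_f.
have tl_inj := uniq_map_inj uniq_tl.
have [i s def_c] := rot_to ec.
rewrite -(perm_rot i) def_c.
have : cycle (fun e f => hd e == tl f) (e :: s) by rewrite -def_c rot_cycle.
have s_sub : {subset e :: s <= c} by move=> x; rewrite -def_c mem_rot.
have f_es : f \in e :: s by rewrite -def_c mem_rot.
have uniq_es : uniq (e :: s) by rewrite -def_c rot_uniq (map_uniq uniq_tl).
have tl_eq x y : x \in e :: s -> y \in e :: s -> tl x = tl y -> x = y.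
  by move=> xs ys; apply: tl_inj; apply: s_sub.
clear def_c s_sub; case: s f_es uniq_es tl_eq => [|y [|z s]] f_es uniq_es tl_eq /=.
- by move: e_neq_f f_es; rewrite inE eq_sym => /negPf->.
- rewrite andbT => /andP[/eqP tl_y _].
  by rewrite (tl_eq f y f_es) ?inE ?eqxx ?orbT // -hd_e.
- case/and3P=> /eqP tl_y /eqP tl_z _.
  have f_y : f = y by apply: tl_eq f_es _ _; rewrite ?inE ?eqxx ?orbT // -hd_e.
  have z_e : z = e by apply: tl_eq; rewrite ?inE ?eqxx ?orbT // -hd_f f_y tl_z.
  by move: uniq_es; rewrite z_e /= !inE eqxx !orbT.
Qed.

End CycleOfArcs.

Ltac case_ifs :=
  repeat match goal with |- context[if ?b then _ else _] =>
    lazymatch b with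
    | context[if _ then _ else _] => fail
    | _ => case: (boolP b) => ?
    end
  end.

Section Arcs.
Variables (m n : nat) (l : 'I_m -> 'I_n) (k : 'I_m -> nat).
Hypothesis k_range : forall i, (2 <= k i <= n.-1)%N.

Definition signed_jump (e : darc m n) (j : 'I_n) : int :=
  if is_rev e then - (jumps l k e j : nat)%:Z else (jumps l k e j : nat)%:Z.

Definition F_arc (e : darc m n) : bool := ~~ (is_row e && is_rev e).

Lemma hd_arc_modz e :
  F_arc e -> (hd l k e)%:Z = (((tl l k e)%:Z + arc_len k e) %% n)%Z.
Proof.
case: e => [[i|j] []] //= _; rewrite /hd /tl /arc_len /ftl /fhd /=.
- have := k_range i; have := ltn_ord (l i) => li /andP[k_ge2 k_le].
  have n_gt0 : (0 < n)%N by lia.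
  have -> : (l i + k i + n - 1 = (l i + k i - 1) + n)%N by lia.
  rewrite modnDr !modn_lt_double; try lia.
  rewrite /modz !divz_lt_double //; try (case_ifs; lia).
- have jn := ltn_ord j; rewrite (modn_small jn) !modn_lt_double; try lia.
  rewrite /modz !divz_lt_double //; try (case_ifs; lia).
- have jn := ltn_ord j; rewrite (modn_small jn) !modn_lt_double; try lia.
  rewrite /modz !divz_lt_double //; try (case_ifs; lia).
Qed.

Lemma divz_arc_jump e (j : 'I_n) : F_arc e ->
  (((tl l k e)%:Z + arc_len k e - (j : nat)%:Z) %/ n)%Z - (((tl l k e)%:Z - (j : nat)%:Z) %/ n)%Z
  = signed_jump e j.
Proof.
have jn := ltn_ord j.
case: e => [[i|j'] []] //= _;
  rewrite /tl /arc_len /ftl /fhd /signed_jump /jumps /in_cint /=.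
- have := k_range i; have := ltn_ord (l i) => li /andP[k_ge2 k_le].
  rewrite !modn_lt_double; try lia.
  rewrite !divz_lt_double //; try (case_ifs; lia).
- have jn' := ltn_ord j'; rewrite -val_eqE /= modn_small //.
  rewrite !divz_lt_double //; try (case_ifs; lia).
- have jn' := ltn_ord j'; rewrite -val_eqE /= modn_lt_double; try lia.
  rewrite !divz_lt_double //; try (case_ifs; lia).
Qed.

Lemma inr_arc_eqE (j j' : 'I_n) (b b' : bool) :
  ((inr j, b) == (inr j', b') :> darc m n) = (j == j') && (b == b').
Proof. by apply/eqP/andP => [[-> ->]|[/eqP-> /eqP->]]. Qed.

Definition row_weight (f : 'I_m -> nat) (e : darc m n) : nat :=
  if e is (inl i, false) then f i else 0%N.

Lemma count_is_row_F (s : seq (darc m n)) :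
  all F_arc s -> count (@is_row m n) s = \sum_(e <- s) row_weight (fun=> 1%N) e.
Proof.
elim: s => [|e s IHs] /=; first by rewrite big_nil.
by case/andP=> e_F /IHs->; rewrite big_cons; case: e e_F => [[i|j] []].
Qed.

Lemma tGb_const_F (s : seq (darc m n)) (alpha : nat) :
  all F_arc s -> tGb s (const_b alpha) = (alpha * count (@is_row m n) s)%N.
Proof.
rewrite /tGb; elim: s => [|e s IHs] /=; first by rewrite big_nil muln0.
case/andP=> e_F /IHs IH; rewrite big_cons IH.
by case: e e_F => [[i|j] []] //= _; rewrite /const_b; lia.
Qed.

Lemma rev_row_b_F (s : seq (darc m n)) (b : 'I_m -> nat) :
  all F_arc s -> rev_row_b s b = 0.
Proof.
rewrite /rev_row_b; elim: s => [|e s IHs] /=; first by rewrite big_nil.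
by case/andP=> e_F /IHs IH; rewrite big_cons IH; case: e e_F => [[i|j] []].
Qed.

Lemma p_minus_F (s : seq (darc m n)) (j : 'I_n) :
  all F_arc s -> p_minus l k s j = count_mem (inr j, true) s.
Proof.
move=> /allP s_F; apply: eq_in_count => e /s_F.
by case: e => [[i|j'] []] //= _; rewrite /jumps /= inr_arc_eqE ?andbT ?andbF.
Qed.

Variable A : 'M[nat]_(m, n).
Hypothesis A_circular : circular_with A l k.

Lemma sum_signed_jumps_F (s : seq (darc m n)) (j : 'I_n) : all F_arc s ->
  \sum_(e <- s) signed_jump e j =
    (\sum_(e <- s) row_weight (fun i => A i j) e)%:Z
    + (count_mem (inr j, false) s)%:Z - (count_mem (inr j, true) s)%:Z.
Proof.
elim: s => [|e s IHs] /=; first by rewrite !big_nil.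
case/andP=> e_F /IHs IH; rewrite !big_cons IH.
have -> : signed_jump e j = (row_weight (fun i => A i j) e)%:Z
    + (e == (inr j, false))%:Z - (e == (inr j, true))%:Z.
  case: e e_F => [[i|j'] []] //= _; rewrite /signed_jump /jumps /=.
  - by rewrite (proj2 (A_circular i)) subr0 addr0.
  - by rewrite !inr_arc_eqE /=; case: (j' == j).
  - by rewrite !inr_arc_eqE /=; case: (j' == j).
rewrite !PoszD; ring.
Qed.

Lemma big_fwd_rows (s : seq (darc m n)) (f : 'I_m -> nat) : uniq s ->
  (\sum_(i | (inl i, false) \in s) f i = \sum_(e <- s) row_weight f e)%N.
Proof.
elim: s => [|e s IHs] /=; first by rewrite big_nil big_pred0.
case/andP=> e_notin_s /IHs IH; rewrite big_cons -IH.
case: e e_notin_s => [[i0|j] []] e_notin_s /=;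
  try by apply: eq_bigl => i; rewrite in_cons xpair_eqE /= ?andbF.
rewrite (bigD1 i0) ?mem_head //=; congr (addn _).
apply: eq_bigl => i; rewrite in_cons xpair_eqE andbT.
have -> : (inl i == inl i0 :> 'I_m + 'I_n) = (i == i0) by [].
by case: eqVneq => [->|] /=; rewrite ?andbF ?andbT ?(negPf e_notin_s).
Qed.

Section Circuit.
Variable c : seq (darc m n).
Hypothesis c_F_circuit : F_circuit l k c.

Let c_cycle : cycle (fun e f => hd l k e == tl l k f) c.
Proof. by case/andP: c_F_circuit => /and3P[]. Qed.

Let uniq_tl : uniq (map (tl l k) c).
Proof. by case/andP: c_F_circuit => /and3P[]. Qed.

Let c_F : all F_arc c.
Proof. by case/andP: c_F_circuit. Qed.

Let uniq_c : uniq c := map_uniq uniq_tl.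

(* Lifted to the integers, an arc's length is its head minus its tail plus
   [n] times its number of wrap-arounds; over a circuit heads and tails cancel,
   and the wrap-arounds measured relative to [j] are the jumps over [j]. *)
Lemma winding_signed_jumps (j : 'I_n) : winding k c = \sum_(e <- c) signed_jump e j.
Proof.
have n_gt0 : (0 < n)%N by case: (n) j => [[]|].
have n_neq0 : (n : int) != 0 by lia.
pose wraps e := (((tl l k e)%:Z + arc_len k e) %/ n)%Z.
have len_wraps e : e \in c ->
    arc_len k e = wraps e * n + (hd l k e)%:Z - (tl l k e)%:Z.
  by move/(allP c_F)/hd_arc_modz->; rewrite /modz /wraps; ring.
have jump_wraps e : e \in c -> signed_jump e j =
    wraps e + (((hd l k e)%:Z - (j : nat)%:Z) %/ n)%Z
            - (((tl l k e)%:Z - (j : nat)%:Z) %/ n)%Z.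
  move=> ec; rewrite -(divz_arc_jump j (allP c_F e ec)) -divzMDl //.
  by congr ((_ %/ _)%Z - _); rewrite (len_wraps e ec); ring.
rewrite /winding (eq_big_seq _ len_wraps) (eq_big_seq _ jump_wraps).
rewrite !big_split /= !sumrN -mulr_suml.
rewrite (big_hd_cycle c_cycle (fun x => x%:Z)).
rewrite (big_hd_cycle c_cycle (fun x => ((x%:Z - (j : nat)%:Z) %/ n)%Z)).
by rewrite !addrK mulzK.
Qed.

Lemma winding_eq0_antiparallel (j : 'I_n) :
  (inr j, false) \in c -> (inr j, true) \in c -> winding k c = 0.
Proof.
move=> fwd_c rev_c.
have fwd_neq_rev : (inr j, false) != (inr j, true) :> darc m n.
  by rewrite inr_arc_eqE andbF.
have pair := cycle_antiparallel_pair c_cycle uniq_tl fwd_c rev_c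
  fwd_neq_rev (erefl _) (erefl _).
by rewrite /winding (perm_big _ pair) !big_cons big_nil /arc_len /= addr0 subrr div0z.
Qed.

Lemma big_row_arcs (f : 'I_m -> nat) :
  (\sum_(i in row_arcs c) f i = \sum_(e <- c) row_weight f e)%N.
Proof. by rewrite -big_fwd_rows //; apply: eq_bigl => i; rewrite inE. Qed.

Lemma card_row_arcs : #|row_arcs c| = count (@is_row m n) c.
Proof. by rewrite -sum1_card big_row_arcs count_is_row_F. Qed.

Lemma p_minus_otimes (j : 'I_n) : p_minus l k c j = (j \in otimes c).
Proof. by rewrite p_minus_F // count_uniq_mem // inE. Qed.

Lemma colsum_row_arcs (j : 'I_n) :
  (colsum A (row_arcs c) j)%:Z + ((inr j, false) \in c)%:Z
    - ((inr j, true) \in c)%:Z = winding k c.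
Proof.
rewrite /colsum big_row_arcs -!count_uniq_mem //.
by rewrite -sum_signed_jumps_F // (winding_signed_jumps j).
Qed.

Lemma colsum_otimes (j : 'I_n) : winding k c != 0 -> j \in otimes c ->
  (colsum A (row_arcs c) j)%:Z = winding k c + 1.
Proof.
move=> winding_neq0; rewrite inE => rev_c; rewrite -(colsum_row_arcs j) rev_c.
have [fwd_c|_] := boolP ((inr j, false) \in c); last by rewrite /=; ring.
by rewrite (winding_eq0_antiparallel fwd_c rev_c) in winding_neq0.
Qed.

Lemma colsum_notin_otimes (j : 'I_n) : j \notin otimes c ->
  (colsum A (row_arcs c) j)%:Z <= winding k c.
Proof.
rewrite inE => /negPf rev_notin_c; rewrite -(colsum_row_arcs j) rev_notin_c.
by rewrite subr0 lerDl.
Qed.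

Lemma pstar_row_arcs : 0 < winding k c -> otimes c != set0 ->
  (pstar A (row_arcs c))%:Z = winding k c.
Proof.
move=> winding_gt0 /set0Pn[j0 j0_otimes].
have winding_neq0 : winding k c != 0 by rewrite gt_eqF.
have n_gt0 : (0 < #|'I_n|)%N by rewrite card_ord (leq_ltn_trans _ (ltn_ord j0)).
have [j1 max_j1] := bigop.eq_bigmax (colsum A (row_arcs c)) n_gt0.
have le_j0_j1 : (colsum A (row_arcs c) j0 <= colsum A (row_arcs c) j1)%N.
  by rewrite -max_j1 leq_bigmax.
have colsum_j1 : (colsum A (row_arcs c) j1)%:Z = winding k c + 1.
  have [/(colsum_otimes winding_neq0)//|/colsum_notin_otimes] := boolP (j1 \in otimes c).
  by move: le_j0_j1; rewrite -lez_nat (colsum_otimes winding_neq0 j0_otimes); lia.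
by rewrite /pstar max_j1; lia.
Qed.

Lemma grho_const (alpha : nat) :
  grho k c (const_b alpha) = (alpha * count (@is_row m n) c)%N%:Z
    - winding k c * floorq (alpha * count (@is_row m n) c)%N%:Z (winding k c).
Proof. by rewrite /grho /gbeta tGb_const_F // mulrC. Qed.

Lemma gamma_coef_const (alpha : nat) (j : 'I_n) :
  gamma_coef l k c (const_b alpha) j = grho k c (const_b alpha) + (j \in otimes c)%:Z.
Proof. by rewrite /gamma_coef p_minus_otimes addrC. Qed.

Lemma gamma_rhs_const (alpha : nat) : winding k c != 0 ->
  ~~ (winding k c %| tGb c (const_b alpha))%Z ->
  gamma_rhs k c (const_b alpha) = grho k c (const_b alpha)
    * ceilq (alpha * count (@is_row m n) c)%N%:Z (winding k c).
Proof.
move=> winding_neq0 not_dvd.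
by rewrite /gamma_rhs rev_row_b_F // addr0 /gbeta -tGb_const_F // ceilq_floorq.
Qed.

Lemma rfi_coef_row_arcs (j : 'I_n) : 0 < winding k c -> otimes c != set0 ->
  rfi_coef A (row_arcs c) (pstar A (row_arcs c)) j
    = (rfi_r (row_arcs c) (pstar A (row_arcs c)))%:Z + (j \in otimes c)%:Z.
Proof.
move=> winding_gt0 otimes_neq0.
have winding_neq0 : winding k c != 0 by rewrite gt_eqF.
have pstar_winding := pstar_row_arcs winding_gt0 otimes_neq0.
rewrite /rfi_coef; have [j_otimes|j_notin] := boolP (j \in otimes c).
  have := colsum_otimes winding_neq0 j_otimes; rewrite -pstar_winding -PoszD.
  by move/eqP; rewrite eqz_nat addn1 => /eqP->; rewrite ltnn eqxx.
have := colsum_notin_otimes j_notin.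
by rewrite -pstar_winding lez_nat => ->; rewrite addr0.
Qed.

End Circuit.

End Arcs.

Lemma rfi_r_floorq (m : nat) (F : {set 'I_m}) (p : nat) : (0 < p)%N ->
  (rfi_r F p)%:Z = #|F|%:Z - p%:Z * floorq #|F|%:Z p%:Z.
Proof. by move=> p_gt0; rewrite /rfi_r floorq_divz // divz_nat; lia. Qed.

Unset Implicit Arguments.

Theorem theorem6p2 (m n : nat) (A : 'M[nat]_(m, n))
    (l : 'I_m -> 'I_n) (k : 'I_m -> nat) (hA : circular_with A l k)
    (alpha : nat) (halpha : (0 < alpha)%N)
    (c : seq (darc m n)) (hc : F_circuit l k c)
    (s : nat) (hs : s = count (@is_row m n) c)
    (p : int) (hp : winding k c = p)
    (hdiv : ~~ (p %| tGb c (@const_b m alpha))%Z)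
    (hp2 : 2 <= p) (hpt : p <= tGb c (@const_b m alpha) - 1) :
  let r : int := (alpha * s)%N%:Z - p * floorq (alpha * s)%N%:Z p in
  [/\ (forall j : 'I_n, gamma_coef l k c (@const_b m alpha) j =
                        (if j \in otimes c then r + 1 else r)),
      gamma_rhs k c (@const_b m alpha) = r * ceilq (alpha * s)%N%:Z p
    & (alpha = 1%N -> otimes c != set0 ->
       let F := row_arcs c in
       rfi_ok F (pstar A F) /\
       (forall j : 'I_n, rfi_coef A F (pstar A F) j =
                         gamma_coef l k c (@const_b m alpha) j) /\
       rfi_rhs F (pstar A F) = gamma_rhs k c (@const_b m alpha))].
Proof.
move=> r.
have k_range i : (2 <= k i <= n.-1)%N := (hA i).1.
have rho_r : grho k c (const_b alpha) = r by rewrite (grho_const hc) hp -hs.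
have gamma_rhs_r : gamma_rhs k c (const_b alpha) = r * ceilq (alpha * s)%N%:Z p.
  by rewrite (gamma_rhs_const hc) ?hp ?hs ?rho_r //; lia.
split=> [j||alpha1 otimes_neq0 F] //.
  by rewrite (gamma_coef_const hc) rho_r; case: (j \in otimes c); rewrite ?addr0.
subst alpha; have winding_gt0 : 0 < winding k c by rewrite hp; lia.
have pstar_p : (pstar A F)%:Z = p by rewrite (pstar_row_arcs k_range hA hc).
have cardF : #|F| = s by rewrite (card_row_arcs hc).
have rfi_r_r : (rfi_r F (pstar A F))%:Z = r.
  by rewrite rfi_r_floorq; [rewrite pstar_p cardF /r mul1n | lia].
split; [|split].
- move: hdiv hpt; rewrite (tGb_const_F _ (proj2 (andP hc))) mul1n -hs.
  by rewrite -pstar_p dvdzE /= /rfi_ok cardF => hdiv hpt; apply/and4P; split => //; lia.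
- move=> j; rewrite (rfi_coef_row_arcs k_range hA hc) //.
  by rewrite (gamma_coef_const hc) rfi_r_r rho_r.
- by rewrite /rfi_rhs rfi_r_r gamma_rhs_r cardF pstar_p mul1n.
Qed.
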